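(* Let $d>0$, let $\ell$ be a certified lower bound with certificate matrix $\Lambda$, and suppose $f(d,\ell)=1$. Let $j\in\{1,\dots,m\}$ satisfy $0<a_j^\top y(d,\ell)-u_j\le\gamma_j(d,\ell)$. Define $\ell^{(1)}:=\ell-\frac{2(t_j(d,\ell)-v_j(\ell))}{d_j\gamma_j(d,\ell)^2}e_j$ and suppose $f(d,\ell^{(1)})>0$. Define $d^{(1)}:=d/f(d,\ell^{(1)})$, $\ell^{(2)}:=\ell^{(1)}+\frac{2(2v_j(\ell^{(1)})-\gamma_j(d^{(1)},\ell^{(1)}))}{(m-1)d^{(1)}_j\gamma_j(d^{(1)},\ell^{(1)})^2+2}e_j$, $d^{(2)}:=d^{(1)}+\frac{2}{m-1}\frac{1}{\gamma_j(d^{(1)},\ell^{(1)})^2}e_j$, and $d^{(3)}:=d^{(2)}/f(d^{(2)},\ell^{(2)})$. Then there is a scalar $\alpha(d,\ell)>\frac{m^2-1}{m^2}$ such that $$d^{(3)}=\alpha(d,\ell)\Big(d+\frac{2}{m-1}\frac{1}{\gamma_j(d,\ell)^2}e_j\Big).$$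
   Context: Standing assumption: $A=[a_1|\cdots|a_m]\in\mathbb{R}^{n\times m}$ has columns of unit Euclidean norm and $\{A\lambda:\lambda\ge0\}=\mathbb{R}^n$; $u\in\mathbb{R}^m$. $D=\mathrm{diag}(d)$; $r(\ell)=\tfrac12(u+\ell)$, $v(\ell)=\tfrac12(u-\ell)$, $B(d)=ADA^\top$, $y(d,\ell)=B(d)^{-1}ADr(\ell)$, $t(d,\ell)=A^\top y(d,\ell)-r(\ell)$, $f(d,\ell)=v(\ell)^\top Dv(\ell)-t(d,\ell)^\top Dt(d,\ell)$, $\gamma_i(d,\ell)=\sqrt{f(d,\ell)a_i^\top B(d)^{-1}a_i}$ when $f(d,\ell)>0$. $\ell$ is a certified lower bound with certificate matrix $\Lambda\in\mathbb{R}^{m\times m}$ if $A\Lambda=-A$, $\Lambda\ge0$, $-\Lambda^\top u\ge\ell$. *)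

From HB Require Import structures.
From mathcomp Require Import all_boot all_order all_algebra.
Set Implicit Arguments. Unset Strict Implicit. Unset Printing Implicit Defensive.
Import Order.TTheory GRing.Theory Num.Theory.
Local Open Scope ring_scope.

Section Defs.
Variables (R : rcfType) (n m : nat) (A : 'M[R]_(n, m)) (u : 'cV[R]_m).

Definition unit_columns : Prop :=
  forall i : 'I_m, \sum_(k < n) (A k i) ^+ 2 = 1.
Definition positively_spanning : Prop :=
  forall x : 'cV[R]_n, exists lam : 'cV[R]_m,
    (forall i, 0 <= lam i 0) /\ A *m lam = x.

Definition Dm (d : 'cV[R]_m) : 'M[R]_m := diag_mx d^T.
Definition rv (l : 'cV[R]_m) : 'cV[R]_m := 2^-1 *: (u + l).
Definition vv (l : 'cV[R]_m) : 'cV[R]_m := 2^-1 *: (u - l).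
Definition Bm (d : 'cV[R]_m) : 'M[R]_n := A *m Dm d *m A^T.
Definition yv (d l : 'cV[R]_m) : 'cV[R]_n :=
  invmx (Bm d) *m (A *m Dm d *m rv l).
Definition tv (d l : 'cV[R]_m) : 'cV[R]_m := A^T *m yv d l - rv l.
Definition fval (d l : 'cV[R]_m) : R :=
  ((vv l)^T *m Dm d *m vv l) 0 0 - ((tv d l)^T *m Dm d *m tv d l) 0 0.
(* gamma_i(d,l) = sqrt(f(d,l) a_i^T B(d)^{-1} a_i); only used where f > 0 *)
Definition gam (d l : 'cV[R]_m) (i : 'I_m) : R :=
  Num.sqrt (fval d l * ((col i A)^T *m invmx (Bm d) *m col i A) 0 0).

Definition certified_lb (l : 'cV[R]_m) (Lam : 'M[R]_m) : Prop :=
  [/\ A *m Lam = - A, (forall i k, 0 <= Lam i k) &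
      (forall i, l i 0 <= (- (Lam^T *m u)) i 0)].
End Defs.

Definition ev {R : rcfType} {m : nat} (j : 'I_m) : 'cV[R]_m := delta_mx j 0.

From HB Require Import structures.
From mathcomp Require Import all_boot all_order all_algebra.
From mathcomp Require Import ring lra.
Import Order.TTheory GRing.Theory Num.Theory.
Local Open Scope ring_scope.
Set Implicit Arguments. Unset Strict Implicit. Unset Printing Implicit Defensive.

(* For x = A^T y write q(y) = sum_i d_i (x_i - u_i)(x_i - l_i).  Since t(d,l) is
   D-orthogonal to the range of A^T, q(y) = |A^T (y - y(d,l))|_D^2 - f(d,l), and
   conversely any such representation of q determines f(d,l) and A^T y(d,l).
   Changing l_j or d_j adds to q a quadratic in a_j^T y, which is absorbed by
   completing the square along B(d)^-1 a_j.  With s = a_j^T y - u_j and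
   beta = a_j^T B(d)^-1 a_j this gives f(d, l1) = 1 - s^2 / beta together with
   a_j^T y(d, l1) = u_j; after normalising d1, the update to (d2, l2) multiplies
   f by 1 + 1/((m-1)(m+1)) = m^2/(m^2-1).  Hence
   alpha = (m^2-1) / (m^2 f(d, l1)) > (m^2-1)/m^2, as 0 < f(d, l1) < 1. *)

Section WeightedForms.
Variables (R : rcfType) (m : nat).
Implicit Types (d l x w : 'cV[R]_m) (c e : R).

Lemma sumr_agree_off (I : finType) (j : I) (F G : I -> R) :
  (forall i, i != j -> F i = G i) -> \sum_i F i = \sum_i G i + (F j - G j).
Proof.
move=> FG; rewrite (bigD1 j) //= [in RHS](bigD1 j) //=.
by rewrite (eq_bigr G) => [|i /FG]; first ring.
Qed.

Lemma entryD x w i : (x + w) i 0 = x i 0 + w i 0. Proof. by rewrite mxE. Qed.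
Lemma entryN x i : (- x) i 0 = - x i 0. Proof. by rewrite mxE. Qed.
Lemma entryB x w i : (x - w) i 0 = x i 0 - w i 0. Proof. by rewrite !mxE. Qed.
Lemma entryZ c x i : (c *: x) i 0 = c * x i 0. Proof. by rewrite mxE. Qed.

Definition wdot d x w : R := \sum_i d i 0 * (x i 0 * w i 0).

Lemma Dm_formE d x w : (x^T *m Dm d *m w) 0 0 = wdot d x w.
Proof.
by rewrite /Dm mul_mx_diag mxE; apply: eq_bigr => i _; rewrite !mxE; ring.
Qed.

Lemma wdot0r d x : wdot d x 0 = 0.
Proof. by rewrite /wdot big1 // => i _; rewrite mxE !mulr0. Qed.

Lemma wdot_ge0 d x : (forall i, 0 < d i 0) -> 0 <= wdot d x x.
Proof.
move=> hd; apply: sumr_ge0 => i _.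
by apply: mulr_ge0; [exact: ltW | rewrite -expr2 sqr_ge0].
Qed.

Lemma wdot_eq0 d x : (forall i, 0 < d i 0) -> wdot d x x = 0 -> x = 0.
Proof.
move=> hd x0; apply/matrixP => i k; rewrite (ord1 k) mxE.
have term_ge0 k' : predT k' -> 0 <= d k' 0 * (x k' 0 * x k' 0).
  by move=> _; apply: mulr_ge0; [exact: ltW | rewrite -expr2 sqr_ge0].
have /eqP := psumr_eq0P term_ge0 x0 (i := i) isT.
by rewrite mulf_eq0 gt_eqF //= -expr2 sqrf_eq0 => /eqP.
Qed.

Lemma wdot_scalew c d x w : wdot (c *: d) x w = c * wdot d x w.
Proof. by rewrite /wdot mulr_sumr; apply: eq_bigr => i _; rewrite mxE -mulrA. Qed.

Lemma wdot_update j d x e :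
  wdot (d + e *: ev j) x x = wdot d x x + e * x j 0 ^+ 2.
Proof.
rewrite /wdot (@sumr_agree_off _ j _ (fun i => d i 0 * (x i 0 * x i 0))).
  by rewrite !mxE eqxx /=; ring.
by move=> i /negbTE ij; rewrite !mxE ij /= mulr0 addr0.
Qed.

Lemma wdot_expandB d x w c :
  wdot d (x - c *: w) (x - c *: w) =
  wdot d x x - 2 * c * wdot d x w + c ^+ 2 * wdot d w w.
Proof.
transitivity (\sum_i (d i 0 * (x i 0 * x i 0) - 2 * c * (d i 0 * (x i 0 * w i 0))
   + c ^+ 2 * (d i 0 * (w i 0 * w i 0)))).
  by apply: eq_bigr => i _; rewrite !mxE; ring.
by rewrite big_split sumrB /= /wdot -!mulr_sumr.
Qed.

Variable u : 'cV[R]_m.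

Definition qgap d l x : R := \sum_i d i 0 * ((x i 0 - u i 0) * (x i 0 - l i 0)).

Lemma qgap_scalew c d l x : qgap (c *: d) l x = c * qgap d l x.
Proof. by rewrite /qgap mulr_sumr; apply: eq_bigr => i _; rewrite mxE -mulrA. Qed.

Lemma qgap_update j d l x e dl :
  qgap (d + e *: ev j) (l + dl *: ev j) x =
  qgap d l x + e * ((x j 0 - u j 0) * (x j 0 - l j 0 - dl))
  - d j 0 * dl * (x j 0 - u j 0).
Proof.
rewrite /qgap (@sumr_agree_off _ j _
  (fun i => d i 0 * ((x i 0 - u i 0) * (x i 0 - l i 0)))).
  by rewrite !mxE eqxx /=; ring.
by move=> i /negbTE ij; rewrite !mxE ij /= !mulr0 !addr0.
Qed.

Lemma qgap_decomp d l x x0 :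
  wdot d (x - x0) (x0 - rv u l) = 0 ->
  qgap d l x = wdot d (x - x0) (x - x0) -
    (wdot d (vv u l) (vv u l) - wdot d (x0 - rv u l) (x0 - rv u l)).
Proof.
move=> orth.
transitivity (\sum_i (d i 0 * ((x - x0) i 0 * (x - x0) i 0) -
   (d i 0 * (vv u l i 0 * vv u l i 0) -
    d i 0 * ((x0 - rv u l) i 0 * (x0 - rv u l) i 0)) +
   2 * (d i 0 * ((x - x0) i 0 * (x0 - rv u l) i 0)))).
  by apply: eq_bigr => i _; rewrite !mxE; field.
by rewrite big_split /= -mulr_sumr -/(wdot _ _ _) orth mulr0 addr0 !sumrB.
Qed.

End WeightedForms.

Section Gram.
Variables (R : rcfType) (n m : nat) (A : 'M[R]_(n, m)) (u : 'cV[R]_m).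
Hypotheses (hA1 : unit_columns A) (hs : positively_spanning A).
Implicit Types (d l : 'cV[R]_m) (y z : 'cV[R]_n) (c : R).

Lemma Bm_formE d z z' : (z^T *m Bm A d *m z') 0 0 = wdot d (A^T *m z) (A^T *m z').
Proof. by rewrite -Dm_formE /Bm trmx_mul trmxK !mulmxA. Qed.

Lemma Bm_unitmx d : (forall i, 0 < d i 0) -> Bm A d \in unitmx.
Proof.
move=> hd; rewrite unitmxE unitfE; apply/negP => /det0P [v vn0 vB].
have ATv0 : A^T *m v^T = 0.
  by apply: (wdot_eq0 hd); rewrite -Bm_formE trmxK vB mul0mx mxE.
have vA0 : v *m A = 0 by rewrite -[v *m A]trmxK trmx_mul ATv0 trmx0.
have [lam [_ hl]] := hs v^T.
have vvT0 : (v *m v^T) 0 0 = 0 by rewrite -hl mulmxA vA0 mul0mx mxE.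
have one_gt0 i : 0 < (const_mx 1 : 'cV[R]_n) i 0 by rewrite mxE ltr01.
move/negP: vn0; apply; apply/eqP.
rewrite -[v]trmxK (wdot_eq0 (x := v^T) one_gt0) ?trmx0 //.
by rewrite -vvT0 mxE; apply: eq_bigr => k _; rewrite !mxE mul1r.
Qed.

Lemma tv_orth d l z : Bm A d \in unitmx -> wdot d (A^T *m z) (tv A u d l) = 0.
Proof.
move=> hB; rewrite -Dm_formE trmx_mul trmxK -!mulmxA.
have -> : A *m (Dm d *m tv A u d l) = 0.
  by rewrite /tv /yv !mulmxBr !mulmxA -/(Bm A d) mulmxV // mul1mx subrr.
by rewrite mulmx0 mxE.
Qed.

Lemma qgap_ATE d l y : Bm A d \in unitmx ->
  qgap u d l (A^T *m y) =
  wdot d (A^T *m (y - yv A u d l)) (A^T *m (y - yv A u d l)) - fval A u d l.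
Proof.
move=> hB; rewrite mulmxBr (qgap_decomp (x0 := A^T *m yv A u d l)).
  by rewrite /fval !Dm_formE.
by rewrite -mulmxBr; exact: tv_orth.
Qed.

Lemma fval_unique d l ys F : (forall i, 0 < d i 0) ->
  (forall y, qgap u d l (A^T *m y) =
             wdot d (A^T *m (y - ys)) (A^T *m (y - ys)) - F) ->
  fval A u d l = F /\ A^T *m yv A u d l = A^T *m ys.
Proof.
move=> hd hq; have hB := Bm_unitmx hd.
have := hq ys; rewrite qgap_ATE // subrr mulmx0 wdot0r => at_ys.
have := hq (yv A u d l); rewrite qgap_ATE // subrr mulmx0 wdot0r => at_yv.
have ge1 := wdot_ge0 (A^T *m (ys - yv A u d l)) hd.
have ge2 := wdot_ge0 (A^T *m (yv A u d l - ys)) hd.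
have : wdot d (A^T *m (ys - yv A u d l)) (A^T *m (ys - yv A u d l)) = 0 by lra.
by move/(wdot_eq0 hd)/eqP; rewrite mulmxBr subr_eq0 => /eqP ->; split=> //; lra.
Qed.

Variable j : 'I_m.

Definition bdir d : 'cV[R]_n := invmx (Bm A d) *m col j A.
Definition beta d : R := ((col j A)^T *m invmx (Bm A d) *m col j A) 0 0.

Lemma AT_entry z : (A^T *m z) j 0 = ((col j A)^T *m z) 0 0.
Proof. by rewrite !mxE; apply: eq_bigr => k _; rewrite !mxE. Qed.

Lemma AT_bdir d : (A^T *m bdir d) j 0 = beta d.
Proof. by rewrite AT_entry /bdir mulmxA. Qed.

Lemma wdot_bdir d z : Bm A d \in unitmx ->
  wdot d (A^T *m z) (A^T *m bdir d) = (A^T *m z) j 0.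
Proof.
move=> hB; rewrite -Bm_formE /bdir -mulmxA mulKVmx // AT_entry.
by rewrite !mxE; apply: eq_bigr => k _; rewrite !mxE mulrC.
Qed.

Lemma beta_wdot d : Bm A d \in unitmx ->
  beta d = wdot d (A^T *m bdir d) (A^T *m bdir d).
Proof. by move=> hB; rewrite wdot_bdir // AT_bdir. Qed.

Lemma AT_col : (A^T *m col j A) j 0 = 1.
Proof. by rewrite -(hA1 j) mxE; apply: eq_bigr => k _; rewrite !mxE expr2. Qed.

Lemma beta_gt0 d : (forall i, 0 < d i 0) -> 0 < beta d.
Proof.
move=> hd; have hB := Bm_unitmx hd.
rewrite lt0r beta_wdot // wdot_ge0 // andbT; apply/eqP => /(wdot_eq0 hd) b0.
have := wdot_bdir (col j A) hB; rewrite b0 wdot0r AT_col => /eqP.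
by rewrite eq_sym oner_eq0.
Qed.

Lemma gam_sqr_fval1 d l : (forall i, 0 < d i 0) -> fval A u d l = 1 ->
  gam A u d l j ^+ 2 = beta d.
Proof. by move=> hd hf; rewrite /gam hf mul1r sqr_sqrtr // ltW // beta_gt0. Qed.

Lemma gam_gt0_fval1 d l : (forall i, 0 < d i 0) -> fval A u d l = 1 ->
  0 < gam A u d l j.
Proof. by move=> hd hf; rewrite /gam hf mul1r sqrtr_gt0 beta_gt0. Qed.

Lemma Bm_scale c d : Bm A (c *: d) = c *: Bm A d.
Proof.
rewrite /Bm; have -> : Dm (c *: d) = c *: Dm d.
  by apply/matrixP => i k; rewrite !mxE mulrnAr.
by rewrite -scalemxAr -scalemxAl.
Qed.

Lemma beta_scale c d : Bm A (c *: d) \in unitmx -> beta (c *: d) = c^-1 * beta d.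
Proof.
by rewrite /beta Bm_scale => hB; rewrite invmxZ // -scalemxAr -scalemxAl mxE.
Qed.

Lemma fval_scale c d l : 0 < c -> (forall i, 0 < d i 0) ->
  fval A u (c *: d) l = c * fval A u d l /\
  A^T *m yv A u (c *: d) l = A^T *m yv A u d l.
Proof.
move=> c0 hd; have hcd i : 0 < (c *: d) i 0 by rewrite mxE mulr_gt0.
apply: fval_unique => // y.
by rewrite qgap_scalew qgap_ATE ?Bm_unitmx // wdot_scalew mulrBr.
Qed.

Lemma fval_normalize d l : (forall i, 0 < d i 0) -> 0 < fval A u d l ->
  let d1 := (fval A u d l)^-1 *: d in
  [/\ fval A u d1 l = 1, A^T *m yv A u d1 l = A^T *m yv A u d l,
      beta d1 = fval A u d l * beta d & forall i, 0 < d1 i 0].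
Proof.
move=> hd f0 d1; have fV0 : 0 < (fval A u d l)^-1 by rewrite invr_gt0.
have hd1 i : 0 < d1 i 0 by rewrite entryZ mulr_gt0.
have [-> ->] := fval_scale l fV0 hd.
by rewrite mulVf ?gt_eqF // beta_scale ?Bm_unitmx // invrK.
Qed.

Lemma tv_sub_vv d l :
  tv A u d l j 0 - vv u l j 0 = (A^T *m yv A u d l) j 0 - u j 0.
Proof. by rewrite /tv /vv /rv !mxE; field. Qed.

Lemma fval_cut d l : (forall i, 0 < d i 0) -> fval A u d l = 1 ->
  let s := tv A u d l j 0 - vv u l j 0 in
  let l1 := l - (2 * s / (d j 0 * gam A u d l j ^+ 2)) *: ev j in
  fval A u d l1 = 1 - s ^+ 2 / gam A u d l j ^+ 2 /\
  (A^T *m yv A u d l1) j 0 = u j 0.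
Proof.
move=> hd hf; rewrite tv_sub_vv gam_sqr_fval1 // => s l1.
have hB := Bm_unitmx hd; have hb := beta_gt0 hd; have hdj := hd j.
set y0 := yv A u d l; set k := - (s / beta d).
have [-> ->] : fval A u d l1 = 1 - s ^+ 2 / beta d /\
               A^T *m yv A u d l1 = A^T *m (y0 + k *: bdir d).
  apply: fval_unique => // y.
  have := qgap_update u j d l (A^T *m y) 0 (- (2 * s / (d j 0 * beta d))).
  rewrite scale0r addr0 scaleNr -/l1 mul0r addr0 => ->.
  rewrite qgap_ATE // hf -/y0 opprD addrA.
  rewrite [A^T *m (_ - k *: _)]mulmxBr -scalemxAr wdot_expandB wdot_bdir //.
  rewrite -beta_wdot // mulmxBr entryB /k /s -/y0.
  by field; rewrite !gt_eqF.
split=> //.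
rewrite mulmxDr -scalemxAr entryD entryZ AT_bdir /k /s -/y0.
by field; rewrite gt_eqF.
Qed.

Lemma fval_update d l M : (forall i, 0 < d i 0) ->
  fval A u d l = 1 -> (A^T *m yv A u d l) j 0 = u j 0 -> 0 < M ->
  let g := gam A u d l j in
  fval A u (d + (2 / M * (g ^+ 2)^-1) *: ev j)
    (l + (2 * (2 * vv u l j 0 - g) / (M * d j 0 * g ^+ 2 + 2)) *: ev j)
  = 1 + (M * (M + 2))^-1.
Proof.
move=> hd hf hc M0 g; have hB := Bm_unitmx hd; have hdj := hd j.
have hg : g ^+ 2 = beta d by rewrite gam_sqr_fval1.
have g0 : 0 < g by rewrite gam_gt0_fval1.
set e := 2 / M * (g ^+ 2)^-1.
set dl := 2 * (2 * vv u l j 0 - g) / (M * d j 0 * g ^+ 2 + 2).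
have e0 : 0 < e by rewrite mulr_gt0 ?invr_gt0 ?exprn_gt0 ?divr_gt0.
have hde i : 0 < (d + e *: ev j) i 0.
  rewrite !mxE; case: (i == j) => /=; last by rewrite mulr0 addr0.
  by rewrite mulr1 addr_gt0.
set y0 := yv A u d l; set k := - (g^-1 / (M + 2)).
have [] := @fval_unique (d + e *: ev j) (l + dl *: ev j) (y0 + k *: bdir d)
  (1 + (M * (M + 2))^-1) hde => // y.
rewrite qgap_update qgap_ATE // hf -/y0 opprD addrA wdot_update.
rewrite [A^T *m (_ - k *: _)]mulmxBr -scalemxAr wdot_expandB wdot_bdir //.
rewrite -beta_wdot // !entryB entryZ AT_bdir mulmxBr entryB hc -hg.
rewrite /dl /e /k /vv entryZ entryB.
have p1 : 0 < M + 2 by rewrite addr_gt0.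
have p2 : 0 < M * d j 0 * g ^+ 2 + 2.
  by rewrite addr_gt0 // !mulr_gt0 // exprn_gt0.
by field; rewrite !gt_eqF.
Qed.

End Gram.

Lemma positively_spanning_gt1 (R : rcfType) (n m : nat) (A : 'M[R]_(n, m))
    (j : 'I_m) :
  unit_columns A -> positively_spanning A -> (1 < m)%N.
Proof.
move=> hA1 hs; rewrite ltnNge; apply/negP => m_le1.
have only_j (i : 'I_m) : i = j.
  apply: val_inj.
  move: (leq_trans (ltn_ord i) m_le1) (leq_trans (ltn_ord j) m_le1).
  by rewrite !ltnS !leqn0 => /eqP hi /eqP hj; rewrite /= hi hj.
have [lam [lam_ge0 hlam]] := hs (- col j A).
have lam_col : A *m lam = lam j 0 *: col j A.
  apply/matrixP => k z; rewrite (ord1 z) !mxE (bigD1 j) //= big1 => [|i /eqP].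
    by rewrite addr0 mulrC.
  by rewrite (only_j i).
move: hlam => /(congr1 (mulmx A^T))/matrixP/(_ j 0).
rewrite lam_col -scalemxAr mulmxN entryZ entryN AT_col // mulr1 => lam_j.
by have := lam_ge0 j; rewrite lam_j oppr_ge0 ler10.
Qed.

Lemma alpha_bound (R : rcfType) (M f : R) : 0 < M -> 0 < f < 1 ->
  ((M + 1) ^+ 2 - 1) / (M + 1) ^+ 2 < ((1 + (M * (M + 2))^-1) * f)^-1.
Proof.
move=> M0 /andP[f0 f1].
have p1 : 0 < M + 1 by rewrite addr_gt0.
have p2 : 0 < M * (M + 2) by rewrite mulr_gt0 // addr_gt0.
have -> : ((1 + (M * (M + 2))^-1) * f)^-1 = ((M + 1) ^+ 2 - 1) / (M + 1) ^+ 2 / f.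
  by field; rewrite !gt_eqF // addr_gt0.
have -> : (M + 1) ^+ 2 - 1 = M * (M + 2) by ring.
by rewrite ltr_pdivlMr // gtr_pMr // divr_gt0 ?exprn_gt0.
Qed.

Unset Implicit Arguments. Set Strict Implicit.

Theorem theorem7 (R : rcfType) (n m : nat) (A : 'M[R]_(n, m)) (u : 'cV[R]_m)
    (hA1 : unit_columns A) (hA2 : positively_spanning A)
    (d l : 'cV[R]_m) (Lam : 'M[R]_m)
    (hd : forall i, 0 < d i 0)
    (hl : certified_lb A u l Lam)
    (hf : fval A u d l = 1)
    (j : 'I_m)
    (hj : 0 < (A^T *m yv A u d l) j 0 - u j 0 /\
          (A^T *m yv A u d l) j 0 - u j 0 <= gam A u d l j) :
  let l1 := l - (2 * (tv A u d l j 0 - vv u l j 0)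
                   / (d j 0 * gam A u d l j ^+ 2)) *: ev j in
  0 < fval A u d l1 ->
  let d1 := (fval A u d l1)^-1 *: d in
  let g1 := gam A u d1 l1 j in
  let l2 := l1 + (2 * (2 * vv u l1 j 0 - g1)
                   / ((m - 1)%:R * d1 j 0 * g1 ^+ 2 + 2)) *: ev j in
  let d2 := d1 + (2 / (m - 1)%:R * (g1 ^+ 2)^-1) *: ev j in
  let d3 := (fval A u d2 l2)^-1 *: d2 in
  exists alpha : R,
    (m%:R ^+ 2 - 1) / m%:R ^+ 2 < alpha /\
    d3 = alpha *: (d + (2 / (m - 1)%:R * (gam A u d l j ^+ 2)^-1) *: ev j).
Proof.
move=> l1 f1_gt0 d1 g1 l2 d2 d3.
have m_gt1 := positively_spanning_gt1 j hA1 hA2.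
have M_gt0 : 0 < (m - 1)%:R :> R by rewrite ltr0n subn_gt0.
have mE : m%:R = (m - 1)%:R + 1 :> R by rewrite natrB ?subrK // ltnW.
set M := (m - 1)%:R in M_gt0 mE *.
have := fval_cut hA1 hA2 j hd hf; cbv zeta; rewrite -/l1 => -[f1E c1].
set f1 := fval A u d l1 in f1_gt0 f1E *.
have f1_lt1 : f1 < 1.
  suff : 0 < (tv A u d l j 0 - vv u l j 0) ^+ 2 / gam A u d l j ^+ 2.
    by rewrite f1E; lra.
  by rewrite divr_gt0 ?exprn_gt0 ?gam_gt0_fval1 // tv_sub_vv hj.1.
have := fval_normalize hA2 j hd f1_gt0; cbv zeta.
rewrite -/f1 -/d1 => -[fd1 cd1 b1E hd1].
have c1' : (A^T *m yv A u d1 l1) j 0 = u j 0 by rewrite cd1.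
have := fval_update hA1 hA2 hd1 fd1 c1' M_gt0; cbv zeta => f2E.
exists ((1 + (M * (M + 2))^-1) * f1)^-1; split.
  by rewrite mE alpha_bound // f1_gt0 f1_lt1.
have M2_gt0 : 0 < M + 2 by rewrite addr_gt0.
have MM_gt0 : 0 < M * (M + 2) + 1 by rewrite addr_gt0 // mulr_gt0.
have b_gt0 := beta_gt0 hA1 hA2 j hd.
rewrite /d3 f2E /d2 /g1 !gam_sqr_fval1 // b1E /d1 -/M -/f1 !scalerDr !scalerA.
by congr (_ *: _ + _ *: _); field; rewrite -/M !gt_eqF.
Qed.
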